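(* Let $B=\{[0:0:1],[0:1:0],[1:0:0],[1:1:1]\}\subset\mathbb P^2$, let $Q_B=\{a_1x_2x_3+a_2x_1x_3+a_3x_1x_2 : a_1+a_2+a_3=0\}$ be the $2$-dimensional space of quadrics vanishing on $B$, and let $S_B$ be the (4-dimensional) space of homogeneous sextics $f\in\mathbb C[x_1,x_2,x_3]$ such that the double cover of $\mathbb P^2$ branched along $\{f=0\}$ has singularities equal to or worse than rational double points of type $D_4$ above every point of $B$. Then the map $(Q_B)^3\to\mathbb C[x_1,x_2,x_3]$, $(q_1,q_2,q_3)\mapsto q_1q_2q_3$, induces a surjection $\mathbb P(Q_B)^3\to\mathbb P(S_B)$, and this surjection can be identified with the natural projection $(\mathbb P^1)^3\to(\mathbb P^1)^3/\mathfrak S_3\cong\mathbb P^3$ onto the symmetric product.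
   Context: Having a singularity ''equal to or worse than a rational double point of type $D_4$'' above a point $p$ means that $f$ vanishes to order at least $3$ at $p$ (equivalently, the Hessian matrix of $f$ vanishes at $p$). $\mathfrak S_3$ acts on $(\mathbb P^1)^3$ by permuting factors. *)

From HB Require Import structures.
From mathcomp Require Import all_boot all_order all_algebra all_fingroup.
From mathcomp Require Import mpoly.
Set Implicit Arguments. Unset Strict Implicit. Unset Printing Implicit Defensive.
Import Order.TTheory GRing.Theory.
Local Open Scope ring_scope.

Section Defs.
Variable F : fieldType.
Notation P := {mpoly F[3]}.

Definition x1 : P := 'X_(0 : 'I_3).
Definition x2 : P := 'X_(1 : 'I_3).
Definition x3 : P := 'X_(2 : 'I_3).

(* Coordinates of a point of P^2 (a representative in F^3). *)
Definition pt (a b c : F) : 'I_3 -> F := fun i => [:: a; b; c]`_i.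

Definition inB (p : 'I_3 -> F) : Prop :=
  [\/ p = pt 0 0 1, p = pt 0 1 0, p = pt 1 0 0 | p = pt 1 1 1].

Definition vanish_order3 (f : P) (p : 'I_3 -> F) : Prop :=
  [/\ f.@[p] = 0,
      forall i : 'I_3, (mderiv i f).@[p] = 0 &
      forall i j : 'I_3, (mderiv i (mderiv j f)).@[p] = 0].

(* S_B : homogeneous sextics (or 0) whose double cover has singularities
   equal to or worse than D_4 above every point of B. *)
Definition inSB (f : P) : Prop :=
  f \is 6.-homog /\ forall p, inB p -> vanish_order3 f p.

Definition quadB (a1 a2 a3 : F) : P :=
  a1 *: (x2 * x3) + a2 *: (x1 * x3) + a3 *: (x1 * x2).
Definition inQB (q : P) : Prop :=
  exists a1 a2 a3 : F, a1 + a2 + a3 = 0 /\ q = quadB a1 a2 a3.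

(* projective equality: proportional by a nonzero scalar *)
Definition proportional (p q : P) : Prop :=
  exists c : F, c != 0 /\ p = c *: q.

End Defs.

(* Every quadric in Q_B is a linear form a s + b t in s = x2 (x3 - x1) and
   t = x1 (x3 - x2), and vanishes on B; hence a product of three of them vanishes
   to order 3 on B and is a binary cubic in (s, t).  Conversely, vanishing to
   order 3 at the coordinate points kills every sextic monomial with an exponent
   >= 4, and the six second derivatives at [1:1:1] cut the remaining ten
   monomials down to exactly the binary cubics in (s, t).  Over an algebraically
   closed field a binary cubic splits into linear factors, which gives
   surjectivity.  Finally, every nonzero q in Q_B has a zero v outside B at which
   no other point of P(Q_B) vanishes; evaluating two factorizations at v matches
   their factors one at a time, so the fibres are the S_3-orbits. *)

From HB Require Import structures.
From mathcomp Require Import all_boot all_order all_algebra all_fingroup.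
From mathcomp Require Import mpoly.
From mathcomp Require Import ring zify.
Import Order.TTheory GRing.Theory.
Local Open Scope ring_scope.
Set Implicit Arguments. Unset Strict Implicit. Unset Printing Implicit Defensive.

Lemma ord3_ind (Q : 'I_3 -> Prop) : Q 0 -> Q 1 -> Q 2 -> forall i, Q i.
Proof.
move=> Q0 Q1 Q2 [[|[|[|]]] //= lt_i3].
- by rewrite (_ : Ordinal _ = 0) //; apply/val_inj.
- by rewrite (_ : Ordinal _ = 1) //; apply/val_inj.
- by rewrite (_ : Ordinal _ = 2) //; apply/val_inj.
Qed.

Lemma ord4_ind (Q : 'I_4 -> Prop) : Q 0 -> Q 1 -> Q 2 -> Q 3 -> forall i, Q i.
Proof.
move=> Q0 Q1 Q2 Q3 [[|[|[|[|]]]] //= lt_i4].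
- by rewrite (_ : Ordinal _ = 0) //; apply/val_inj.
- by rewrite (_ : Ordinal _ = 1) //; apply/val_inj.
- by rewrite (_ : Ordinal _ = 2) //; apply/val_inj.
- by rewrite (_ : Ordinal _ = 3) //; apply/val_inj.
Qed.

Section Monomials.
Variable n : nat.
Implicit Types (m : 'X_{1..n}) (k : 'I_n).

Lemma mnm_peel_unit m e : mdeg m = e.+1 ->
  exists i m', m = (m' + U_(i))%MM /\ mdeg m' = e.
Proof.
move=> deg_m.
have /existsP[i m_i] : [exists i, 0 < m i]%N.
  apply: contraT => /existsPn m0; move: deg_m; rewrite mdegE big1 // => l _.
  by move: (m0 l); rewrite lt0n negbK => /eqP.
have le_Um : (U_(i) <= m)%MM.
  by apply/mnm_lepP => j; rewrite mnm1E; case: eqP => // <-.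
exists i, (m - U_(i))%MM; rewrite submK //; split => //.
by move: deg_m; rewrite -{1}(submK le_Um) mdegD mdeg1 addn1 => -[].
Qed.

Lemma mnm_split_unit d m k : mdeg m = (d + 2)%N -> (d <= m k)%N ->
  exists i j, m = (U_(k) *+ d + U_(i) + U_(j))%MM.
Proof.
move=> deg_m le_d_mk.
have le_Um : (U_(k) *+ d <= m)%MM.
  apply/mnm_lepP => l; rewrite mulmnE mnm1E.
  by case: eqP => [<-|_]; rewrite ?mul1n ?mul0n.
have deg_rest : mdeg (m - U_(k) *+ d)%MM = 2.
  by move: deg_m; rewrite -{1}(submK le_Um) mdegD mdegMn mdeg1 mul1n; lia.
have [i [m1 [def_rest /(mnm_peel_unit)[j [m0 [def_m1 /eqP]]]]]] := mnm_peel_unit deg_rest.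
rewrite mdeg_eq0 => /eqP m00.
exists j, i; rewrite -(submK le_Um) def_rest def_m1 m00 add0m.
by rewrite addmC addmA.
Qed.

Lemma prod_unit_exp (R : comNzSemiRingType) m k :
  \prod_(l < n) ((l == k)%:R : R) ^+ m l = (m == U_(k) *+ mdeg m)%MM%:R.
Proof.
rewrite (bigD1 k) //= eqxx expr1n mul1r.
have [def_m|ne_m] := eqVneq m (U_(k) *+ mdeg m)%MM.
  apply: big1 => l lk.
  by rewrite def_m mulmnE mnm1E [k == l]eq_sym (negbTE lk) mul0n expr0.
have /existsP[l /andP[lk ml]] : [exists l, (l != k) && (m l != 0%N)].
  apply: contraT => /existsPn m0; case/eqP: ne_m; apply/mnmP => l.
  rewrite mulmnE mnm1E; have [<-|lk] := eqVneq k l; last first.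
    by move: (m0 l); rewrite eq_sym lk /= negbK mul0n => /eqP.
  rewrite mul1n mdegE (bigD1 k) //= big1 ?addn0 // => l' lk'.
  by move: (m0 l'); rewrite lk' /= negbK => /eqP.
by rewrite (bigD1 l) //= (negbTE lk) expr0n (negbTE ml) mul0r.
Qed.

Lemma meval_unit_dhomog (R : comNzRingType) k (p : {mpoly R[n]}) d :
  p \is d.-homog -> p.@[fun l => (l == k)%:R] = p@_(U_(k) *+ d)%MM.
Proof.
move=> p_homog; rewrite mevalE [in RHS](mpolyE p) raddf_sum /=.
apply: eq_big_seq => m p_m; rewrite prod_unit_exp (dhomog_mf p_homog p_m).
by rewrite mcoeffZ mcoeffX.
Qed.

Lemma dhomog_mderiv (R : nzRingType) i (p : {mpoly R[n]}) d :
  p \is d.+1.-homog -> p^`M(i) \is d.-homog.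
Proof.
move=> p_homog; apply/dhomogP => m; rewrite mcoeff_msupp mcoeff_mderiv => nz.
have : (m + U_(i))%MM \in msupp p.
  by rewrite mcoeff_msupp; apply: contraNneq nz => ->; rewrite mul0rn.
by move/(dhomog_mf p_homog); rewrite /= mdegD mdeg1 addn1 => -[].
Qed.

Section CharZero.
Variable F : fieldType.
Hypothesis charF0 : [pchar F] =i pred0.

Lemma natr_neq0 j : j.+1%:R != 0 :> F.
Proof. by move/pcharf0P: charF0 => ->. Qed.

Lemma mulrnS_eq0 (x : F) j : x *+ j.+1 = 0 -> x = 0.
Proof.
by move/eqP; rewrite -mulr_natr mulf_eq0 (negbTE (natr_neq0 j)) orbF => /eqP.
Qed.

Lemma mcoeff_unit_hessian (p : {mpoly F[n]}) d i j k : p \is d.+2.-homog ->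
  (p^`M(j))^`M(i).@[fun l => (l == k)%:R] = 0 ->
  p@_(U_(k) *+ d + U_(i) + U_(j))%MM = 0.
Proof.
move=> p_homog; rewrite (meval_unit_dhomog k (dhomog_mderiv i (dhomog_mderiv j p_homog))).
by rewrite !mcoeff_mderiv => /mulrnS_eq0 /mulrnS_eq0.
Qed.

End CharZero.
End Monomials.

Section QuadricsB.
Variable F : fieldType.
Local Notation P := {mpoly F[3]}.
Implicit Types (q f g h : P) (p v : 'I_3 -> F).

Definition sB : P := x2 F * (x3 F - x1 F).
Definition tB : P := x1 F * (x3 F - x2 F).
Definition linB (a b : F) : P := a *: sB + b *: tB.

Lemma meval_sB v : sB.@[v] = v 1 * (v 2 - v 0).
Proof. by rewrite mevalM mevalB !mevalXU. Qed.

Lemma meval_tB v : tB.@[v] = v 0 * (v 2 - v 1).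
Proof. by rewrite mevalM mevalB !mevalXU. Qed.

Lemma meval_linB a b v : (linB a b).@[v] = a * sB.@[v] + b * tB.@[v].
Proof. by rewrite mevalD !mevalZ. Qed.

Lemma inQB_linB q : inQB q <-> exists a b, q = linB a b.
Proof.
split=> [[a1 [a2 [a3 [sum_a ->]]]]|[a [b ->]]].
  exists a1, a2; have -> : a3 = - a1 - a2.
    by apply/eqP; rewrite -subr_eq0 -sum_a; apply/eqP; ring.
  by rewrite /quadB /linB /sB /tB -!mul_mpolyC; ring.
exists a, b, (- a - b); split; first ring.
by rewrite /quadB /linB /sB /tB -!mul_mpolyC; ring.
Qed.

Lemma linB_eq0 a b : (linB a b == 0) = (a == 0) && (b == 0).
Proof.
apply/eqP/andP => [lin0|[/eqP-> /eqP->]]; last by rewrite /linB !scale0r addr0.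
have ev v : a * sB.@[v] + b * tB.@[v] = 0 by rewrite -meval_linB lin0 meval0.
by split; apply/eqP; [have := ev (pt 0 1 1) | have := ev (pt 1 0 1)];
  rewrite meval_sB meval_tB /pt /= => <-; ring.
Qed.

Lemma inQB_homog q : inQB q -> q \is 2.-homog.
Proof.
have X_homog (i : 'I_3) : ('X_i : P) \is 1.-homog by rewrite dhomogX /= mdeg1.
case=> a1 [a2 [a3 [_ ->]]]; rewrite /quadB /x1 /x2 /x3.
by rewrite !dhomogD ?dhomogZ // (dhomogM (X_homog _) (X_homog _)).
Qed.

Lemma inQB_vanish q p : inQB q -> inB p -> q.@[p] = 0.
Proof.
case/inQB_linB=> a [b ->]; rewrite meval_linB meval_sB meval_tB.
by case=> ->; rewrite /pt /=; ring.
Qed.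

Lemma vanish_order3_mul3 (f g h : P) p : f.@[p] = 0 -> g.@[p] = 0 -> h.@[p] = 0 ->
  vanish_order3 (f * g * h) p.
Proof.
move=> f0 g0 h0; split => [|i|i j].
- by rewrite !mevalM f0 g0 h0 !mulr0.
- by rewrite !(mderivM, mevalD, mevalM) f0 g0 h0 !(mul0r, mulr0, addr0).
- by rewrite !(mderivM, mderivD, mevalD, mevalM) f0 g0 h0 !(mul0r, mulr0, addr0).
Qed.

Lemma inSB_mul3 f g h : inQB f -> inQB g -> inQB h -> inSB (f * g * h).
Proof.
move=> Qf Qg Qh; split.
  exact: dhomogM (dhomogM (inQB_homog Qf) (inQB_homog Qg)) (inQB_homog Qh).
by move=> p Bp; apply: vanish_order3_mul3; apply: inQB_vanish Bp.
Qed.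

Lemma inSB_add f g : inSB f -> inSB g -> inSB (f + g).
Proof.
case=> f_homog f3 [g_homog g3]; split=> [|p Bp]; first by rewrite dhomogD.
have [f0 f1 f2] := f3 p Bp; have [g0 g1 g2] := g3 p Bp.
split=> [|i|i j]; rewrite ?mderivD mevalD ?f0 ?g0 ?f1 ?g1 ?f2 ?g2 ?addr0 //.
Qed.

Lemma inSB_scale c f : inSB f -> inSB (c *: f).
Proof.
case=> f_homog f3; split=> [|p Bp]; first by rewrite dhomogZ.
have [f0 f1 f2] := f3 p Bp.
split=> [|i|i j]; rewrite ?mderivZ mevalZ ?f0 ?f1 ?f2 ?mulr0 //.
Qed.

End QuadricsB.
Arguments sB {F}.
Arguments tB {F}.

Section CubicsB.
Variable F : fieldType.
Hypothesis charF0 : [pchar F] =i pred0.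
Local Notation P := {mpoly F[3]}.
Implicit Types (g : P) (v : 'I_3 -> F).

Definition cubicB (c0 c1 c2 c3 : F) : P :=
  c0 *: sB ^+ 3 + c1 *: (sB ^+ 2 * tB) + c2 *: (sB * tB ^+ 2) + c3 *: tB ^+ 3.

Lemma inSB_cubicB c0 c1 c2 c3 : inSB (cubicB c0 c1 c2 c3).
Proof.
have [Qs Qt] : inQB (sB : P) /\ inQB (tB : P).
  by split; apply/inQB_linB; [exists 1, 0 | exists 0, 1];
    rewrite /linB scale1r scale0r ?addr0 ?add0r.
rewrite /cubicB; repeat apply: inSB_add; apply: inSB_scale.
- by rewrite !exprSr expr0 mul1r; apply: inSB_mul3.
- by rewrite !exprSr expr0 mul1r; apply: inSB_mul3.
- by rewrite exprSr expr1 mulrA; apply: inSB_mul3.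
- by rewrite !exprSr expr0 mul1r; apply: inSB_mul3.
Qed.

Lemma cubicB_eq0 c0 c1 c2 c3 : cubicB c0 c1 c2 c3 = 0 ->
  [/\ c0 = 0, c1 = 0, c2 = 0 & c3 = 0].
Proof.
move=> cubic0.
have ev v : c0 * sB.@[v] ^+ 3 + c1 * (sB.@[v] ^+ 2 * tB.@[v])
    + c2 * (sB.@[v] * tB.@[v] ^+ 2) + c3 * tB.@[v] ^+ 3 = 0.
  by rewrite -(meval0 v) -cubic0 !(mevalD, mevalZ, mevalM, rmorphXn).
move: (ev (pt 0 1 1)) (ev (pt 1 0 1)) (ev (pt 1 1 2)) (ev (pt 1 2 3)).
rewrite !meval_sB !meval_tB /pt /= => ev011 ev101 ev112 ev123.
have c0_0 : c0 = 0 by rewrite -ev011; ring.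
have c3_0 : c3 = 0 by rewrite -ev101; ring.
have c1_0 : c1 = 0.
  (* 12 c1 = ev123 - 4 ev112 once c0 = c3 = 0 *)
  apply: (mulrnS_eq0 charF0 (j := 11)).
  by rewrite -(subrr 0) -{1}ev123 -(mulr0 4) -ev112 c0_0 c3_0; ring.
by split=> //; rewrite -ev112 c0_0 c1_0 c3_0; ring.
Qed.

Definition m3 (a b c : nat) : 'X_{1..3} := [multinom [tuple a; b; c]].

Lemma m3E a b c (i : 'I_3) : m3 a b c i = [:: a; b; c]`_i.
Proof. by rewrite /m3 multinomE (tnth_nth 0). Qed.

Definition sextic_monos_le3 : seq 'X_{1..3} :=
  [:: m3 3 3 0; m3 3 0 3; m3 0 3 3; m3 3 2 1; m3 3 1 2;
      m3 2 3 1; m3 1 3 2; m3 2 1 3; m3 1 2 3; m3 2 2 2].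

Definition sextic_le3 (c : 'X_{1..3} -> F) : P :=
  \sum_(l <- sextic_monos_le3) c l *: 'X_[l].

Lemma mem_sextic_monos_le3 (m : 'X_{1..3}) :
  mdeg m = 6 -> (forall k, m k <= 3)%N -> m \in sextic_monos_le3.
Proof.
have -> : m = m3 (m 0) (m 1) (m 2) by apply/mnmP; apply: ord3_ind.
rewrite mdegE !big_ord_recl big_ord0 /= => deg_m le3.
move: deg_m (le3 0) (le3 1) (le3 2); rewrite /bump /=.
by case: (m 0) => [|[|[|[|?]]]]; case: (m _) => [|[|[|[|?]]]]; case: (m _) => [|[|[|[|?]]]].
Qed.

Lemma inB_unit k : exists p, inB p /\ p =1 (fun l => (l == k)%:R : F).
Proof.
move: k; apply: ord3_ind; [exists (pt 1 0 0) | exists (pt 0 1 0) | exists (pt 0 0 1)];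
  by split; [rewrite /inB; constructor | apply: ord3_ind].
Qed.

Lemma inSB_mcoeff_eq0 g m : inSB g -> m \notin sextic_monos_le3 -> g@_m = 0.
Proof.
case=> g_homog g3 m_notin.
have [deg_m|] := eqVneq (mdeg m) 6; last exact: dhomog_nemf_coeff.
have /existsP[k lt3_mk] : [exists k, 3 < m k]%N.
  apply: contraR m_notin => /existsPn le3; apply: mem_sextic_monos_le3 => // k.
  by rewrite leqNgt le3.
have [i [j ->]] := mnm_split_unit (d := 4) deg_m lt3_mk.
have [p [Bp def_p]] := inB_unit k.
apply: (mcoeff_unit_hessian charF0 g_homog).
by rewrite -(meval_eq _ def_p); have [_ _ ->] := g3 p Bp.
Qed.

Lemma inSB_sextic_le3 g : inSB g -> g = sextic_le3 (fun l => g@_l).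
Proof.
move=> SBg; apply/mpolyP => m; rewrite raddf_sum /=.
under eq_bigr do rewrite mcoeffZ mcoeffX.
have [m_in|m_notin] := boolP (m \in sextic_monos_le3).
  rewrite (bigD1_seq m) //= eqxx mulr1 big1 ?addr0 // => l /negbTE->.
  by rewrite mulr0.
rewrite (inSB_mcoeff_eq0 SBg m_notin) big1_seq // => l /andP[_ l_in].
by rewrite (negbTE (memPn m_notin l l_in)) mulr0.
Qed.

Lemma hessian_pt111_sum (c : 'X_{1..3} -> F) (s : seq 'X_{1..3}) i j :
  ((\sum_(l <- s) c l *: 'X_[l])^`M(j))^`M(i).@[pt 1 1 1]
  = \sum_(l <- s) c l * ((l j)%:R * ((l - U_(j))%MM i)%:R).
Proof.
elim: s => [|l s IH]; first by rewrite !big_nil !mderiv0 meval0.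
rewrite !big_cons !mderivD mevalD IH; congr (_ + _).
rewrite !(mderivZ, mderivX, mevalZ, mevalX) big1 ?mulr1 ?mulrA // => k _.
have -> : pt 1 1 1 k = 1 by move: k; apply: ord3_ind.
exact: expr1n.
Qed.

Lemma sextic_le3_cubicB (c : 'X_{1..3} -> F) :
  (forall i j, ((sextic_le3 c)^`M(j))^`M(i).@[pt 1 1 1] = 0) ->
  sextic_le3 c = cubicB (c (m3 0 3 3)) (c (m3 1 2 3)) (c (m3 2 1 3)) (c (m3 3 0 3)).
Proof.
move=> hess0; pose H i j := ((sextic_le3 c)^`M(j))^`M(i).@[pt 1 1 1].
have by_hessian (x y l00 l11 l22 l01 l02 l12 : F) : x *+ 30 = y *+ 30
    + (l00 * H 0 0 + l11 * H 1 1 + l22 * H 2 2 + l01 * H 0 1 + l02 * H 0 2 + l12 * H 1 2) ->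
    x = y.
  rewrite /H !hess0 !mulr0 !addr0 => /eqP; rewrite -subr_eq0 -mulrnBl.
  by move=> /eqP/(mulrnS_eq0 charF0)/eqP; rewrite subr_eq0 => /eqP.
rewrite /H /sextic_le3 !hessian_pt111_sum /sextic_monos_le3 !big_cons !big_nil in by_hessian.
rewrite !mnmBE !mnm1E !m3E /= ?subn0 ?subn1 /= in by_hessian.
(* Each multiplier vector is 30 times a row of the inverse of the 6x6 matrix of
   Hessian entries in the six coefficients eliminated below. *)
have r330 : c (m3 3 3 0) = - c (m3 0 3 3) - c (m3 1 2 3) - c (m3 2 1 3) - c (m3 3 0 3).
  by apply: (by_hessian _ _ 1 1 10 2 (-4) (-4)); ring.
have r132 : c (m3 1 3 2) = - 3 * c (m3 0 3 3) - c (m3 1 2 3).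
  by apply: (by_hessian _ _ 6 3 3 (-6) (-6) 6); ring.
have r231 : c (m3 2 3 1) = 3 * c (m3 0 3 3) + 2 * c (m3 1 2 3) + c (m3 2 1 3).
  by apply: (by_hessian _ _ (-6) 6 (-12) 0 12 (-6)); ring.
have r312 : c (m3 3 1 2) = - 3 * c (m3 3 0 3) - c (m3 2 1 3).
  by apply: (by_hessian _ _ 3 6 3 (-6) 6 (-6)); ring.
have r321 : c (m3 3 2 1) = 3 * c (m3 3 0 3) + c (m3 1 2 3) + 2 * c (m3 2 1 3).
  by apply: (by_hessian _ _ 6 (-6) (-12) 0 (-6) 12); ring.
have r222 : c (m3 2 2 2) = - 2 * c (m3 1 2 3) - 2 * c (m3 2 1 3).
  by apply: (by_hessian _ _ (-9) (-9) 9 12 0 0); ring.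
have X_m3 a b d : 'X_[m3 a b d] = x1 F ^+ a * x2 F ^+ b * x3 F ^+ d.
  rewrite /x1 /x2 /x3 !mpolyXn -!mpolyXD; congr 'X_[_]; apply/mnmP => i.
  by rewrite m3E !mnmDE !mulmnE !mnm1E; move: i; apply: ord3_ind => /=; lia.
rewrite /sextic_le3 /sextic_monos_le3 !big_cons !big_nil !X_m3 r330 r132 r231 r312 r321 r222.
by rewrite /cubicB /sB /tB -!mul_mpolyC; ring.
Qed.

Lemma inSB_cubicBP g : inSB g <-> exists c0 c1 c2 c3, g = cubicB c0 c1 c2 c3.
Proof.
split=> [SBg|[c0 [c1 [c2 [c3 ->]]]]]; last exact: inSB_cubicB.
have [_ g3] := SBg; have B111 : inB (pt 1 1 1 : 'I_3 -> F) by constructor 4.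
do 4!eexists; rewrite {1}(inSB_sextic_le3 SBg).
apply: sextic_le3_cubicB => i j.
by rewrite -(inSB_sextic_le3 SBg); have [_ _ ->] := g3 _ B111.
Qed.

End CubicsB.

Section Splitting.
Variable F : closedFieldType.

Lemma binary_quadratic_split (d0 d1 d2 : F) : exists a b e0 e1 : F,
  [/\ d0 = a * e0, d1 = a * e1 + b * e0 & d2 = b * e1].
Proof.
have [->|d0_neq0] := eqVneq d0 0; first by exists 0, 1, d1, d2; split; ring.
(* [r] is a root of d0 X^2 + d1 X + d2, so [s - r t] divides the form. *)
have [r root_r] := @solve_monicpoly F 2 (fun i => - [:: d2; d1]`_i / d0) isT.
move: root_r; rewrite !big_ord_recr big_ord0 /= => root_r.
have d0r2 : d0 * r ^+ 2 = - d2 - d1 * r by rewrite root_r; field.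
exists 1, (- r), d0, (d1 + r * d0); split; try ring.
have -> : - r * (d1 + r * d0) = - d1 * r - d0 * r ^+ 2 by ring.
by rewrite d0r2; ring.
Qed.

Lemma binary_cubic_split (c0 c1 c2 c3 : F) : exists a b d0 d1 d2 : F,
  [/\ c0 = a * d0, c1 = a * d1 + b * d0, c2 = a * d2 + b * d1 & c3 = b * d2].
Proof.
have [->|c0_neq0] := eqVneq c0 0; first by exists 0, 1, c1, c2, c3; split; ring.
have [r root_r] := @solve_monicpoly F 3 (fun i => - [:: c3; c2; c1]`_i / c0) isT.
move: root_r; rewrite !big_ord_recr big_ord0 /= => root_r.
have c0r3 : c0 * r ^+ 3 = - c3 - c2 * r - c1 * r ^+ 2 by rewrite root_r; field.
exists 1, (- r), c0, (c1 + r * c0), (c2 + r * (c1 + r * c0)); split; try ring.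
have -> : - r * (c2 + r * (c1 + r * c0)) = - c2 * r - c1 * r ^+ 2 - c0 * r ^+ 3 by ring.
by rewrite c0r3; ring.
Qed.

Lemma cubicB_split (c0 c1 c2 c3 : F) : exists a0 b0 a1 b1 a2 b2 : F,
  cubicB c0 c1 c2 c3 = linB a0 b0 * linB a1 b1 * linB a2 b2.
Proof.
have [a0 [b0 [d0 [d1 [d2 [-> -> -> ->]]]]]] := binary_cubic_split c0 c1 c2 c3.
have [a1 [b1 [e0 [e1 [-> -> ->]]]]] := binary_quadratic_split d0 d1 d2.
exists a0, b0, a1, b1, e0, e1.
by rewrite /cubicB /linB -!mul_mpolyC; ring.
Qed.

End Splitting.

Section Fibres.
Variable F : fieldType.
Hypothesis charF0 : [pchar F] =i pred0.
Local Notation P := {mpoly F[3]}.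
Implicit Types (q : P) (v : 'I_3 -> F).

Lemma linB_zero_witness a b : (a != 0) || (b != 0) ->
  exists v, (linB a b).@[v] = 0 /\ ((sB.@[v] != 0) || (tB.@[v] != 0)).
Proof.
move=> ab_neq0; have [<-|neq_ab] := eqVneq a b.
  exists (pt 3 6 4); rewrite meval_linB meval_sB meval_tB /pt /=; split; first ring.
  by rewrite (_ : 6 * (4 - 3) = 5.+1%:R) ?(natr_neq0 charF0 5) //; ring.
(* [1 : y : 2] lies on the conic a s + b t = 0 and has s + t = 2 there, so s and t
   do not both vanish. *)
pose y := - 2 * b / (a - b); have ab_neq0' : a - b != 0 by rewrite subr_eq0.
exists (pt 1 y 2); rewrite meval_linB meval_sB meval_tB /pt /=; split; first by rewrite /y; field.
rewrite -negb_and; apply: contra (natr_neq0 charF0 1) => /andP[/eqP s0 /eqP t0].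
have -> : (1.+1%:R : F) = y * (2 - 1) + 1 * (2 - y) by ring.
by rewrite s0 t0 addr0.
Qed.

Lemma orthogonal_proportional (a b c d s t : F) :
  (c != 0) || (d != 0) -> (s != 0) || (t != 0) ->
  a * s + b * t = 0 -> c * s + d * t = 0 -> exists l, a = l * c /\ b = l * d.
Proof.
move=> cd_neq0 st_neq0 ab_st cd_st.
have det0 : a * d = b * c.
  apply/eqP; rewrite -subr_eq0; case/orP: st_neq0 => [s_neq0|t_neq0].
    have : s * (a * d - b * c) = d * (a * s + b * t) - b * (c * s + d * t) by ring.
    by rewrite ab_st cd_st !mulr0 subrr => /eqP; rewrite mulf_eq0 (negbTE s_neq0).
  have : t * (a * d - b * c) = a * (c * s + d * t) - c * (a * s + b * t) by ring.
  by rewrite ab_st cd_st !mulr0 subrr => /eqP; rewrite mulf_eq0 (negbTE t_neq0).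
case/orP: cd_neq0 => [c_neq0|d_neq0].
  exists (a / c); split; first by field.
  by apply: (mulIf c_neq0); rewrite -det0; field.
exists (b / d); split; last by field.
by apply: (mulIf d_neq0); rewrite det0; field.
Qed.

Lemma inQB_zero_witness q' : inQB q' -> q' != 0 -> exists v, q'.@[v] = 0 /\
  forall q, inQB q -> q != 0 -> q.@[v] = 0 -> proportional q' q.
Proof.
case/inQB_linB => a [b ->]; rewrite linB_eq0 negb_and => ab_neq0.
have [v [ab_v st_neq0]] := linB_zero_witness ab_neq0.
exists v; split=> // _ /inQB_linB[c [d ->]]; rewrite linB_eq0 negb_and => cd_neq0 cd_v.
rewrite !meval_linB in ab_v cd_v.
have [l [def_a def_b]] := orthogonal_proportional cd_neq0 st_neq0 ab_v cd_v.
exists l; split; last by rewrite /linB scalerDr !scalerA def_a def_b.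
by apply: contraTneq ab_neq0 => l0; rewrite def_a def_b l0 !mul0r eqxx.
Qed.

Lemma proportional_cancel (p q X Y : P) k : k != 0 -> p != 0 ->
  proportional p q -> p * X = k *: (q * Y) -> proportional X Y.
Proof.
move=> k_neq0 p_neq0 [c [c_neq0 def_p]] eq_pq.
have q_neq0 : q != 0 by apply: contraNneq p_neq0 => q0; rewrite def_p q0 scaler0.
exists (k / c); split; first by rewrite mulf_neq0 ?invr_eq0.
apply: (mulfI q_neq0); rewrite -scalerAr; apply: (scalerI c_neq0).
by rewrite scalerA mulrCA divff // mulr1 scalerAl -def_p.
Qed.

Lemma mul2_fibre q1' q2' q1 q2 k :
  inQB q1' -> q1' != 0 -> inQB q1 -> q1 != 0 -> inQB q2 -> q2 != 0 -> k != 0 ->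
  q1' * q2' = k *: (q1 * q2) ->
  (proportional q1' q1 /\ proportional q2' q2) \/
  (proportional q1' q2 /\ proportional q2' q1).
Proof.
move=> Qq1' q1'_neq0 Qq1 q1_neq0 Qq2 q2_neq0 k_neq0 eq_q.
have [v [q1'_v match_v]] := inQB_zero_witness Qq1' q1'_neq0.
have /eqP : k * (q1 * q2).@[v] = 0 by rewrite -mevalZ -eq_q mevalM q1'_v mul0r.
rewrite mulf_eq0 (negbTE k_neq0) mevalM mulf_eq0 /= => /orP[] /eqP q_v.
  have p1 := match_v _ Qq1 q1_neq0 q_v.
  by left; split=> //; apply: proportional_cancel k_neq0 q1'_neq0 p1 eq_q.
have p2 := match_v _ Qq2 q2_neq0 q_v.
right; split=> //; apply: proportional_cancel k_neq0 q1'_neq0 p2 _.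
by rewrite eq_q mulrC.
Qed.

Lemma mul3_perm (q : 'I_3 -> P) (s : 'S_3) :
  q (s 0) * q (s 1) * q (s 2) = q 0 * q 1 * q 2.
Proof.
have prod3 (f : 'I_3 -> P) : \prod_(i < 3) f i = f 0 * f 1 * f 2.
  rewrite !big_ord_recr big_ord0 /= mul1r.
  by congr (f _ * f _ * f _); apply/val_inj.
rewrite -prod3 -(prod3 (fun i => q (s i))).
exact/esym/(reindex_inj (@perm_inj _ s)).
Qed.

Lemma mul3_fibre (q q' : 'I_3 -> P) k :
  (forall i, inQB (q i) /\ q i != 0) -> (forall i, inQB (q' i) /\ q' i != 0) ->
  k != 0 -> q' 0 * q' 1 * q' 2 = k *: (q 0 * q 1 * q 2) ->
  exists s : 'S_3, forall i, proportional (q' i) (q (s i)).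
Proof.
move=> Qq Qq' k_neq0 eq_q; have [Qq'0 q'0_neq0] := Qq' 0.
have [v [q'0_v match_v]] := inQB_zero_witness Qq'0 q'0_neq0.
have [i q_i_v] : exists i, (q i).@[v] = 0.
  have /eqP : k * (q 0 * q 1 * q 2).@[v] = 0.
    by rewrite -mevalZ -eq_q !mevalM q'0_v !mul0r.
  rewrite mulf_eq0 (negbTE k_neq0) !mevalM !mulf_eq0 /= -orbA.
  by case/or3P=> /eqP q_v; [exists 0 | exists 1 | exists 2].
(* Reordering q by the transposition (0 i) puts the factor matched with q' 0
   first, where it can be cancelled. *)
pose r j := q (tperm 0 i j).
have p0 : proportional (q' 0) (r 0).
  by rewrite /r tpermL; apply: match_v q_i_v; case: (Qq i).
have [c [c_neq0 eq_r]] : proportional (q' 1 * q' 2) (r 1 * r 2).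
  apply: proportional_cancel k_neq0 q'0_neq0 p0 _.
  by rewrite mulrA eq_q /r -(mul3_perm q (tperm 0 i)) mulrA.
have [Qr1 r1_neq0] := Qq (tperm 0 i 1); have [Qr2 r2_neq0] := Qq (tperm 0 i 2).
have [Qq'1 q'1_neq0] := Qq' 1.
case: (mul2_fibre Qq'1 q'1_neq0 Qr1 r1_neq0 Qr2 r2_neq0 c_neq0 eq_r) => [[p1 p2]|[p1 p2]].
  by exists (tperm 0 i); apply: ord3_ind.
exists (tperm 1%R 2%R * tperm 0 i)%g; apply: ord3_ind; rewrite permM.
- by rewrite [tperm 1%R 2%R 0]tpermD.
- by rewrite [tperm 1%R 2%R 1]tpermL.
- by rewrite [tperm 1%R 2%R 2]tpermR.
Qed.

Lemma mul3_proportional (q q' : 'I_3 -> P) (s : 'S_3) :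
  (forall i, proportional (q' i) (q (s i))) ->
  proportional (q' 0 * q' 1 * q' 2) (q 0 * q 1 * q 2).
Proof.
move=> prop_s; have [c0 [c0_neq0 ->]] := prop_s 0.
have [c1 [c1_neq0 ->]] := prop_s 1; have [c2 [c2_neq0 ->]] := prop_s 2.
exists (c0 * c1 * c2); split; first by rewrite !mulf_neq0.
by rewrite -(mul3_perm q s) -!mul_mpolyC !rmorphM; ring.
Qed.

End Fibres.

Definition basisB (F : fieldType) (i : 'I_4) : {mpoly F[3]} :=
  [:: sB ^+ 3; sB ^+ 2 * tB; sB * tB ^+ 2; tB ^+ 3]`_i.

Lemma sum_basisB (F : fieldType) (c : 'I_4 -> F) :
  \sum_(i < 4) c i *: basisB F i = cubicB (c 0) (c 1) (c 2) (c 3).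
Proof.
rewrite 3!big_ord_recl big_ord1 /cubicB !addrA.
by congr (c _ *: _ + c _ *: _ + c _ *: _ + c _ *: _); apply/val_inj.
Qed.

Theorem lemma3p3 (F : closedFieldType) (charF0 : [pchar F] =i pred0) :
  (* S_B is a 4-dimensional space: it has a basis e_0, ..., e_3 *)
  (exists e : 'I_4 -> {mpoly F[3]},
      (forall f, inSB f <-> exists c : 'I_4 -> F, f = \sum_(i < 4) c i *: e i)
      /\ (forall c : 'I_4 -> F, \sum_(i < 4) c i *: e i = 0 -> forall i, c i = 0))
  (* the product map sends (Q_B)^3 into S_B *)
  /\ (forall q : 'I_3 -> {mpoly F[3]}, (forall i, inQB (q i)) ->
        inSB (q 0 * q 1 * q 2))
  (* the induced map P(Q_B)^3 -> P(S_B) is surjective *)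
  /\ (forall f, inSB f -> f != 0 ->
        exists q : 'I_3 -> {mpoly F[3]},
          (forall i, inQB (q i) /\ q i != 0) /\ proportional f (q 0 * q 1 * q 2))
  (* its fibres are exactly the S_3-orbits, i.e. it is the quotient map
     (P^1)^3 -> (P^1)^3 / S_3 *)
  /\ (forall q q' : 'I_3 -> {mpoly F[3]},
        (forall i, inQB (q i) /\ q i != 0) ->
        (forall i, inQB (q' i) /\ q' i != 0) ->
        (proportional (q' 0 * q' 1 * q' 2) (q 0 * q 1 * q 2) <->
         exists s : 'S_3, forall i, proportional (q' i) (q (s i)))).
Proof.
split; [|split; [|split]].
- exists (basisB F); split=> [f|c].
    rewrite inSB_cubicBP //; split=> [[c0 [c1 [c2 [c3 ->]]]]|[c ->]].
      by exists (fun i => [:: c0; c1; c2; c3]`_i); rewrite sum_basisB.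
    by rewrite sum_basisB; do 4!eexists.
  by rewrite sum_basisB => /(cubicB_eq0 charF0)[c0 c1 c2 c3]; apply: ord4_ind.
- by move=> q Qq; apply: inSB_mul3.
- move=> f /(inSB_cubicBP charF0)[c0 [c1 [c2 [c3 def_f]]]] f_neq0.
  have [a0 [b0 [a1 [b1 [a2 [b2 split_f]]]]]] := cubicB_split c0 c1 c2 c3.
  exists (fun i => [:: linB a0 b0; linB a1 b1; linB a2 b2]`_i); split.
    apply: ord3_ind => /=; (split; first by apply/inQB_linB; do 2!eexists);
      by apply: contraNneq f_neq0 => lin0; rewrite def_f split_f lin0 ?mulr0 ?mul0r.
  by exists 1; rewrite oner_neq0 scale1r def_f split_f.
- move=> q q' Qq Qq'; split=> [[k [k_neq0 eq_q]]|[s prop_s]].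
    exact: mul3_fibre Qq Qq' k_neq0 eq_q.
  exact: mul3_proportional prop_s.
Qed.
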